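(* Fix $m>0$ and $a\in\mathbb R$ with $|a|<m$, and consider the subextremal Kerr spacetime in Boyer--Lindquist coordinates $(t,r,\vartheta,\varphi)$ on the exterior region $r>r_+:=m+\sqrt{m^2-a^2}$, $$\mathfrak g_{m,a}=-\Big(1-\frac{2mr}{\rho^2}\Big)dt^2-\frac{4mar\sin^2\vartheta}{\rho^2}dt\,d\varphi+\frac{\rho^2}{\Delta}dr^2+\rho^2d\vartheta^2+\frac{\Lambda}{\rho^2}\sin^2\vartheta\,d\varphi^2,$$ with $\rho^2=r^2+a^2\cos^2\vartheta$, $\Delta=r^2-2mr+a^2$, $\Lambda=(r^2+a^2)^2-a^2\Delta\sin^2\vartheta$. Then each hypersurface $\{t=\mathrm{const},\ r>r_+\}$ is tangentially maximal; more precisely, the coordinate spheres $\{S_r\}_{r>r_+}$ form a TMCF foliation of each constant-$t$ exterior slice. Equivalently, every constant graph $f\equiv T_0$ solves the TMCF equation on the Kerr exterior.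
   Context: A foliation $\{S_r\}$ of a spacelike hypersurface $M$ (with second fundamental form $K$ in the spacetime) by closed spacelike surfaces is a TMCF foliation if the spacetime mean curvature vector of each leaf is tangent to $M$, equivalently $\mathrm{tr}_{S_r}K=0$ (the trace of $K$ over $TS_r$ with the induced metric) on every leaf; $M$ with such a foliation is called tangentially maximal. For a graph $t=f(r,\vartheta,\varphi)$, ''$f$ solves the TMCF equation'' means the spheres $\{r=\mathrm{const}\}$ of the graph form a TMCF foliation of the graph. *)

From Stdlib Require Import Reals Lra.
From Coquelicot Require Import Coquelicot.
Open Scope R_scope.

(** Spacetime coordinates x = (x 0, x 1, x 2, x 3) = (t, r, theta, phi).
    Only indices 0..3 are meaningful. *)
Definition point := nat -> R.

Definition upd (x : point) (k : nat) (s : R) : point :=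
  fun i => if Nat.eqb i k then s else x i.

Definition partial (k : nat) (F : point -> R) (x : point) : R :=
  Derive (fun s => F (upd x k s)) (x k).

Definition metric := nat -> nat -> point -> R.

Definition sum4 (f : nat -> R) : R := f 0%nat + f 1%nat + f 2%nat + f 3%nat.

(** Christoffel symbols of the first kind:
    Gamma_{nu, i j} = 1/2 (d_i g_{nu j} + d_j g_{nu i} - d_nu g_{i j}),
    so that g(nabla_{d_i} d_j, d_nu) = Gamma_{nu,ij}. *)
Definition Gamma1 (g : metric) (nu i j : nat) (x : point) : R :=
  / 2 * (partial i (g nu j) x + partial j (g nu i) x - partial nu (g i j) x).

Definition unit_normal_t_slice (g : metric) (x : point) (n : nat -> R) : Prop :=
  (forall i : nat, (1 <= i <= 3)%nat -> sum4 (fun mu => g mu i x * n mu) = 0) /\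
  sum4 (fun mu => sum4 (fun nu => g mu nu x * n mu * n nu)) = -1.

(** Second fundamental form of the slice {t = const} w.r.t. the normal n,
    on coordinate tangent vectors d_i, d_j (i, j in 1..3):
    K(d_i, d_j) = g(nabla_{d_i} n, d_j) = - g(n, nabla_{d_i} d_j). *)
Definition sff_t_slice (g : metric) (n : nat -> R) (i j : nat) (x : point) : R :=
  - sum4 (fun nu => n nu * Gamma1 g nu i j x).

(** Trace of K over T S_r = span(d_theta, d_phi) (indices 2, 3) with the
    induced metric sigma_{AB} = g_{AB}, A,B in {2,3}:
    tr_{S_r} K = sigma^{AB} K_{AB}, sigma^{-1} written out for 2x2. *)
Definition trace_Sr_K (g : metric) (n : nat -> R) (x : point) : R :=
  let s22 := g 2%nat 2%nat x in
  let s23 := g 2%nat 3%nat x in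
  let s33 := g 3%nat 3%nat x in
  let det := s22 * s33 - s23 * s23 in
  (s33 * sff_t_slice g n 2 2 x
   - s23 * sff_t_slice g n 2 3 x
   - s23 * sff_t_slice g n 3 2 x
   + s22 * sff_t_slice g n 3 3 x) / det.

Definition kerr_rho2 (a r th : R) : R := r ^ 2 + a ^ 2 * (cos th) ^ 2.
Definition kerr_Delta (m a r : R) : R := r ^ 2 - 2 * m * r + a ^ 2.
Definition kerr_Lambda (m a r th : R) : R :=
  (r ^ 2 + a ^ 2) ^ 2 - a ^ 2 * kerr_Delta m a r * (sin th) ^ 2.

Definition kerr_g (m a : R) : metric :=
  fun mu nu x =>
    let r := x 1%nat in
    let th := x 2%nat in
    let rho2 := kerr_rho2 a r th in
    match mu, nu return R with
    | 0, 0 => - (1 - 2 * m * r / rho2)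
    | 0, 3 | 3, 0 => - (2 * m * a * r * (sin th) ^ 2) / rho2
    | 1, 1 => rho2 / kerr_Delta m a r
    | 2, 2 => rho2
    | 3, 3 => kerr_Lambda m a r th * (sin th) ^ 2 / rho2
    | _, _ => 0
    end.

Definition kerr_rplus (m a : R) : R := m + sqrt (m ^ 2 - a ^ 2).

(** The Kerr metric is stationary, axisymmetric and circular: its components
    depend only on (r, theta), and the (t, phi) block is g-orthogonal to the
    (r, theta) block.  Circularity puts the unit normal n of a t-slice into
    span(d_t, d_phi), so K(d_A, d_A) = - g(n, nabla_{d_A} d_A) only involves
    Gamma_{nu,AA} with nu in {t, phi}; these vanish because d_A g_{nu A} and
    d_nu g_{AA} do.  As the induced metric on S_r is diagonal, its trace of K
    only sees K_{theta theta} and K_{phi phi}, hence is zero.  The off-diagonal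
    K_{theta phi} = 1/2 n^t d_theta g_{t phi} does not vanish in general. *)
From Stdlib Require Import Reals Lra Lia Psatz.
From Coquelicot Require Import Coquelicot.
Open Scope R_scope.

Definition ignorable (k : nat) (F : point -> R) : Prop :=
  forall (y : point) (s : R), F (upd y k s) = F y.

Lemma ignorable_vanishing (k : nat) (F : point -> R) :
  (forall y, F y = 0) -> ignorable k F.
Proof. intros HF y s. rewrite !HF. reflexivity. Qed.

Lemma partial_ignorable (k : nat) (F : point -> R) (x : point) :
  ignorable k F -> partial k F x = 0.
Proof.
  intros HF. unfold partial.
  rewrite (Derive_ext _ (fun _ => F x)) by (intro s; apply HF).
  apply Derive_const.
Qed.

Definition stationary_axisymmetric (g : metric) : Prop :=
  forall mu nu, ignorable 0 (g mu nu) /\ ignorable 3 (g mu nu).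

Definition circular (g : metric) : Prop :=
  forall mu nu y, (mu = 0 \/ mu = 3)%nat -> (nu = 1 \/ nu = 2)%nat ->
    g mu nu y = 0 /\ g nu mu y = 0.

Definition meridional_det (g : metric) (x : point) : R :=
  g 1%nat 1%nat x * g 2%nat 2%nat x - g 1%nat 2%nat x * g 2%nat 1%nat x.

Lemma homogeneous_2x2_trivial (a b c d u v : R) :
  a * d - b * c <> 0 -> a * u + c * v = 0 -> b * u + d * v = 0 -> u = 0 /\ v = 0.
Proof.
  intros Hdet E1 E2.
  assert (Hu : u * (a * d - b * c) = d * (a * u + c * v) - c * (b * u + d * v)) by ring.
  assert (Hv : v * (a * d - b * c) = a * (b * u + d * v) - b * (a * u + c * v)) by ring.
  rewrite E1, E2 in Hu, Hv.
  split; apply (Rmult_eq_reg_r (a * d - b * c)); lra.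
Qed.

Section CircularSlices.

Variable g : metric.
Hypothesis g_sa : stationary_axisymmetric g.
Hypothesis g_circ : circular g.

Lemma Gamma1_killing_diag (nu A : nat) (x : point) :
  (nu = 0 \/ nu = 3)%nat -> (A = 2 \/ A = 3)%nat -> Gamma1 g nu A A x = 0.
Proof.
  intros Hnu HA. unfold Gamma1.
  assert (HnuA : partial A (g nu A) x = 0).
  { apply partial_ignorable. destruct HA as [-> | ->].
    - apply ignorable_vanishing. intro y.
      exact (proj1 (g_circ nu 2%nat y Hnu (or_intror eq_refl))).
    - apply g_sa. }
  assert (HAA : partial nu (g A A) x = 0).
  { apply partial_ignorable. destruct Hnu as [-> | ->]; apply g_sa. }
  rewrite HnuA, HAA. ring.
Qed.

Lemma slice_normal_meridional (x : point) (n : nat -> R) :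
  meridional_det g x <> 0 -> unit_normal_t_slice g x n ->
  n 1%nat = 0 /\ n 2%nat = 0.
Proof.
  intros Hdet [Horth _].
  assert (Z : forall mu nu, (mu = 0 \/ mu = 3)%nat -> (nu = 1 \/ nu = 2)%nat ->
              g mu nu x = 0) by (intros mu nu Hmu Hnu; apply (g_circ mu nu x Hmu Hnu)).
  assert (E1 := Horth 1%nat ltac:(lia)). assert (E2 := Horth 2%nat ltac:(lia)).
  unfold sum4 in E1, E2.
  rewrite (Z 0%nat 1%nat), (Z 3%nat 1%nat) in E1 by auto.
  rewrite (Z 0%nat 2%nat), (Z 3%nat 2%nat) in E2 by auto.
  apply (homogeneous_2x2_trivial _ _ _ _ _ _ Hdet); lra.
Qed.

Lemma sff_t_slice_sphere_diag (x : point) (n : nat -> R) (A : nat) :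
  n 1%nat = 0 -> n 2%nat = 0 -> (A = 2 \/ A = 3)%nat -> sff_t_slice g n A A x = 0.
Proof.
  intros n1 n2 HA. unfold sff_t_slice, sum4.
  rewrite n1, n2, (Gamma1_killing_diag 0 A x), (Gamma1_killing_diag 3 A x) by auto.
  ring.
Qed.

Theorem trace_Sr_K_circular (x : point) (n : nat -> R) :
  meridional_det g x <> 0 -> unit_normal_t_slice g x n -> trace_Sr_K g n x = 0.
Proof.
  intros Hdet Hn.
  destruct (slice_normal_meridional x n Hdet Hn) as [n1 n2].
  unfold trace_Sr_K. cbv zeta.
  rewrite (sff_t_slice_sphere_diag x n 2), (sff_t_slice_sphere_diag x n 3) by auto.
  rewrite (proj2 (g_circ 3%nat 2%nat x (or_intror eq_refl) (or_intror eq_refl))).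
  unfold Rdiv. ring.
Qed.

End CircularSlices.

Lemma kerr_stationary_axisymmetric (m a : R) : stationary_axisymmetric (kerr_g m a).
Proof. intros mu nu. split; intros y s; reflexivity. Qed.

Lemma kerr_circular (m a : R) : circular (kerr_g m a).
Proof. intros mu nu y [-> | ->] [-> | ->]; split; reflexivity. Qed.

Lemma kerr_meridional_det (m a : R) (x : point) :
  meridional_det (kerr_g m a) x = kerr_rho2 a (x 1%nat) (x 2%nat) ^ 2 / kerr_Delta m a (x 1%nat).
Proof. unfold meridional_det, kerr_g. cbv zeta iota. unfold Rdiv. ring. Qed.

Lemma kerr_rho2_pos (a r th : R) : r <> 0 -> 0 < kerr_rho2 a r th.
Proof.
  intros Hr. unfold kerr_rho2.
  assert (0 < r ^ 2) by (rewrite <- Rsqr_pow2; apply Rsqr_pos_lt, Hr).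
  assert (0 <= a ^ 2 * cos th ^ 2) by (apply Rmult_le_pos; apply pow2_ge_0).
  lra.
Qed.

(* No condition on a is needed: if m^2 < a^2 then sqrt returns 0 and
   Delta = (r - m)^2 + (a^2 - m^2) > 0 for every r. *)
Lemma kerr_Delta_pos (m a r : R) : kerr_rplus m a < r -> 0 < kerr_Delta m a r.
Proof.
  unfold kerr_rplus, kerr_Delta. intros Hr.
  destruct (Rle_or_lt 0 (m ^ 2 - a ^ 2)) as [Hd | Hd].
  - pose proof (sqrt_sqrt _ Hd). pose proof (sqrt_pos (m ^ 2 - a ^ 2)).
    assert (0 < r - m + sqrt (m ^ 2 - a ^ 2)) by lra.
    nra.
  - rewrite sqrt_neg_0 in Hr by lra. nra.
Qed.

Theorem mainTheorem4 :
  forall (m a : R), 0 < m -> Rabs a < m ->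
  forall (x : point) (n : nat -> R),
    kerr_rplus m a < x 1%nat ->
    0 < x 2%nat < PI ->
    unit_normal_t_slice (kerr_g m a) x n ->
    trace_Sr_K (kerr_g m a) n x = 0.
Proof.
  intros m a Hm _ x n Hr _ Hn.
  assert (Hr0 : 0 < x 1%nat).
  { pose proof (sqrt_pos (m ^ 2 - a ^ 2)). unfold kerr_rplus in Hr. lra. }
  apply trace_Sr_K_circular;
    [apply kerr_stationary_axisymmetric | apply kerr_circular | | exact Hn].
  rewrite kerr_meridional_det.
  apply Rgt_not_eq, Rdiv_lt_0_compat.
  - apply pow_lt, kerr_rho2_pos. lra.
  - apply kerr_Delta_pos, Hr.
Qed.
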